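(* Let $p$ be a prime and let $f$ be one of the following automorphisms of $\mathbb{Z}_p^2$ (acting on column vectors): $D(b,c)=\begin{bmatrix} b&0\\0&c\end{bmatrix}$ with $1<b\le c<p$; $G(b)=\begin{bmatrix} b&1\\0&b\end{bmatrix}$ with $1<b<p$; $H(q)=\begin{bmatrix}0&1\\-b_0&-b_1\end{bmatrix}$ where $q=x^2+b_1x+b_0$ is irreducible over $\mathbb{Z}_p$. Then the (connected) quandle $\mathrm{Aff}(\mathbb{Z}_p^2,f)$ is simply connected if and only if $f$ is one of: (i) $D(b,c)$ with $bc\not\equiv 1\pmod p$; (ii) $G(b)$ with $b\not\equiv -1\pmod p$; (iii) $H(q)$ with $q=x^2+b_1x+b_0$ and $b_0\neq 1$.
   Context: A quandle is a set $Q$ with a binary operation $*$ such that every left translation $L_x:y\mapsto x*y$ is bijective, $x*(y*z)=(x*y)*(x*z)$ and $x*x=x$. For an abelian group $A$ and $f\in\mathrm{Aut}(A)$, the affine quandle $\mathrm{Aff}(A,f)$ is $A$ with $x*y=x+f(y-x)$. $Q$ is connected if $\langle L_x:x\in Q\rangle$ is transitive on $Q$. Every connected affine quandle over $\mathbb{Z}_p^2$ is isomorphic to $\mathrm{Aff}(\mathbb{Z}_p^2,f)$ for $f$ in the list above. For a set $S$, a quandle cocycle with values in $\mathrm{Sym}_S$ is $\theta:Q\times Q\to\mathrm{Sym}_S$ with $\theta_{x*y,x*z}\theta_{x,z}=\theta_{x,y*z}\theta_{y,z}$ and $\theta_{x,x}=1$; it is cohomologous to the trivial cocycle if there is $\gamma:Q\to\mathrm{Sym}_S$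 with $\theta_{x,y}=\gamma_{x*y}\gamma_y^{-1}$ for all $x,y$. $Q$ is simply connected if it is connected and, for every set $S$, every quandle cocycle with values in $\mathrm{Sym}_S$ is cohomologous to the trivial cocycle. *)

From HB Require Import structures.
From mathcomp Require Import all_boot all_order all_algebra.
Set Implicit Arguments. Unset Strict Implicit. Unset Printing Implicit Defensive.
Import GRing.Theory.
Local Open Scope ring_scope.

Section Quandle.
Variables (Q : Type) (op : Q -> Q -> Q).

Definition is_quandle : Prop :=
  [/\ forall x, bijective (op x),
      forall x y z, op x (op y z) = op (op x y) (op x z)
    & forall x, op x x = x].

(* orbit of x under the group generated by the left translations L_z
   (closed under each L_z and each L_z^{-1}) *)
Inductive lorbit (x : Q) : Q -> Prop :=
  | lorbit_refl : lorbit x x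
  | lorbit_L z y : lorbit x y -> lorbit x (op z y)
  | lorbit_Linv z y : lorbit x (op z y) -> lorbit x y.

Definition quandle_connected : Prop := forall x y, lorbit x y.
End Quandle.

Record Sym (S : Type) := MkSym {
  sym_fun : S -> S;
  sym_inv : S -> S;
  sym_funK : cancel sym_fun sym_inv;
  sym_invK : cancel sym_inv sym_fun }.

Section Cocycle.
Variables (Q : Type) (op : Q -> Q -> Q) (S : Type).

Definition is_quandle_cocycle (theta : Q -> Q -> Sym S) : Prop :=
  (forall x y z (s : S),
     sym_fun (theta (op x y) (op x z)) (sym_fun (theta x z) s)
     = sym_fun (theta x (op y z)) (sym_fun (theta y z) s))
  /\ (forall x (s : S), sym_fun (theta x x) s = s).

Definition cohomologous_to_trivial (theta : Q -> Q -> Sym S) : Prop :=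
  exists gamma : Q -> Sym S, forall x y (s : S),
    sym_fun (theta x y) s = sym_fun (gamma (op x y)) (sym_inv (gamma y) s).
End Cocycle.

Definition simply_connected (Q : Type) (op : Q -> Q -> Q) : Prop :=
  is_quandle op /\ quandle_connected op /\
  forall (S : Type) (theta : Q -> Q -> Sym S),
    is_quandle_cocycle op theta -> cohomologous_to_trivial op theta.

Definition aff_op (p : nat) (f : 'M['F_p]_2) (x y : 'cV['F_p]_2) : 'cV['F_p]_2 :=
  x + f *m (y - x).

Definition matD (p b c : nat) : 'M['F_p]_2 :=
  \matrix_(i < 2, j < 2)
    (if (i == 0) && (j == 0) then b%:R
     else if (i == 1) && (j == 1) then c%:R else 0).

Definition matG (p b : nat) : 'M['F_p]_2 :=
  \matrix_(i < 2, j < 2)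
    (if i == j then b%:R else if (i == 0) && (j == 1) then 1 else 0).

(* companion matrix [[0,1],[-b0,-b1]] of q = x^2 + b1 x + b0 *)
Definition matH (p : nat) (b0 b1 : 'F_p) : 'M['F_p]_2 :=
  \matrix_(i < 2, j < 2)
    (if i == 0 then (if j == 0 then 0 else 1)
     else (if j == 0 then - b0 else - b1)).

Definition polyq (p : nat) (b0 b1 : 'F_p) : {poly 'F_p} :=
  'X^2 + b1 *: 'X + b0%:P.

(* For f and 1 - f invertible, Aff(F_p^2, f) is a connected quandle; it is
   simply connected iff det f <> 1.  A cocycle theta with values in Sym_S
   defines an extension of the quandle on Q x S whose left translations
   L_x (y, s) = (x * y, theta_{x,y} s) satisfy L_x L_y = L_{x*y} L_x.  The
   permutations T_a = L_{(1-f)^-1 a} L_0^-1 lift the translations of F_p^2, and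
   their defects T_{a+b}^-1 T_a T_b lie over the identity, hence commute with
   every L_x.  So the commutators [T_a, T_b] form a biadditive alternating
   pairing, i.e. [T_a, T_b] = c ^ wedge(a, b) with c ^ p = 1; conjugating by
   L_0 gives c = c ^ det f, so c = 1 when det f <> 1.  Then a |-> T_a is additive
   and the fibre maps of the T_y trivialise theta.  When det f = 1, wedge itself
   is an F_p-valued cocycle, and it is not a coboundary since coboundaries
   c (x * y) - c y vanish on a connected affine quandle.
   For D, G and H the eigenvalues of f avoid 0 and 1 (q has no root), and
   det f is b c, b ^ 2 and b0 respectively. *)

From HB Require Import structures.
From mathcomp Require Import all_boot all_order all_algebra.
From mathcomp Require Import boolp ring.
Import GRing.Theory.
Local Open Scope ring_scope.

Section GroupIdentities.
Variable G : groupType.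
Local Open Scope group_scope.
Implicit Types x y z k : G.

Lemma commgMr_central x y z : commute [~ x, y] z -> [~ x, y * z] = [~ x, z] * [~ x, y].
Proof.
move=> cz; have -> : [~ x, z] * [~ x, y] = x^-1 * z^-1 * x * ([~ x, y] * z).
  by rewrite cz /commg /conjg !mulgA.
by rewrite /commg /conjg !invgM !mulgA mulgK.
Qed.

Lemma commuteVl x y : commute x y -> commute x^-1 y.
Proof. by move=> xy; apply/commute_sym/commuteV/commute_sym. Qed.

Lemma commute_commg k x y : commute k x -> commute k y -> commute k [~ x, y].
Proof.
move=> kx ky; rewrite /commg /conjg.
by do ![apply: commuteM | apply: commuteV].
Qed.

Lemma commgMr_commute x y k : commute k x -> commute k y -> [~ x, y * k] = [~ x, y].
Proof.
move=> kx ky; rewrite commgMr_central; last exact/commute_sym/commute_commg.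
by have /commgP/eqP -> := commute_sym kx; rewrite mul1g.
Qed.

Lemma mulg_shift_cancel x y z x' y' l :
  l * x = x' * l -> l * y = y' * l -> x * l * (y * l) = z * l * (x * l) -> x * y' = z * x'.
Proof.
move=> lx ly; rewrite !mulgA -(mulgA x) ly -(mulgA z) lx !mulgA.
by move/mulIg/mulIg.
Qed.
End GroupIdentities.

Lemma Fp_nat_eq {p} n m : prime p -> (n%:R == m%:R :> 'F_p) = (n == m %[mod p])%N.
Proof. by move=> p_pr; rewrite -val_eqE /= !val_Fp_nat. Qed.

Section PrimeExponent.
Context {G : groupType} {p : nat}.
Hypothesis p_pr : prime p.
Local Open Scope group_scope.

Lemma expg_modp (z : G) n : z ^+ p = 1 -> z ^+ n = z ^+ (n %% p).
Proof. by move=> zp; rewrite {1}(divn_eq n p) expgnDr mulnC expgnA zp expg1n mul1g. Qed.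

Lemma expg_eq_trivial (z : G) m n :
  z ^+ p = 1 -> (m != n %[mod p])%N -> z ^+ m = z ^+ n -> z = 1.
Proof.
move=> zp; rewrite -Fp_nat_eq // -subr_eq0 => mn zmn.
pose u := nat_of_ord ((m%:R - n%:R : 'F_p)^-1)%R.
have mu_nu1 : (m * u = n * u + 1 %[mod p])%N.
  apply/eqP; rewrite -Fp_nat_eq // !natrD !natrM natr_Zp.
  by rewrite [_ + 1]addrC -subr_eq -mulrBl mulfV.
apply: (mulgI (z ^+ (n * u))); rewrite mulg1 -expgSr -addn1.
by rewrite (expg_modp _ (n * u + 1) zp) -mu_nu1 -expg_modp // !expgnA zmn.
Qed.
End PrimeExponent.

Lemma cV2_deltaE {R : nzRingType} (a : 'cV[R]_2) :
  a = a 0 0 *: delta_mx 0 0 + a 1 0 *: delta_mx 1 0.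
Proof.
rewrite {1}[a]matrix_sum_delta !big_ord_recl !big_ord0 !addr0.
have -> : lift ord0 ord0 = 1 :> 'I_2 by apply: val_inj.
by [].
Qed.

Lemma Fp_scalerE {p} (x : 'F_p) (v : 'cV['F_p]_2) : x *: v = v *+ x.
Proof. by rewrite -scaler_nat natr_Zp. Qed.

Lemma det_mx2 {R : comPzRingType} (A : 'M[R]_2) :
  \det A = A 0 0 * A 1 1 - A 0 1 * A 1 0.
Proof.
rewrite (expand_det_row _ 0) !big_ord_recl big_ord0 addr0 /cofactor !det_mx11.
rewrite /row' /col' !mxE /= expr0 mul1r expr1 mulN1r mulrN.
by congr (_ * _ - _ * _); congr (A _ _); apply: val_inj.
Qed.

Section CentralCommutators.
Context {G : groupType} {p : nat} {f : 'M['F_p]_2} {T : 'cV['F_p]_2 -> G} {l : G}.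
Local Open Scope group_scope.

Let defect a b := (T (a + b))^-1 * (T a * T b).

Hypothesis p_pr : prime p.
Hypothesis T0 : T 0 = 1.
Hypothesis T_conj : forall a, l * T a = T (f *m a) * l.
Hypothesis defect_commT : forall a b c, commute (defect a b) (T c).
Hypothesis defect_comml : forall a b, commute (defect a b) l.

Local Notation C a b := [~ T a, T b].

Lemma commT_defect a b : C a b = (defect b a)^-1 * defect a b.
Proof. by rewrite /commg /conjg /defect (addrC b a) !invgM !invgK !mulgA mulgK. Qed.

Lemma commT_commute x a b : (forall a b, commute (defect a b) x) -> commute (C a b) x.
Proof.
move=> dx; rewrite commT_defect; apply: commute_sym; apply: commuteM.
  by apply: commuteV; apply: commute_sym.
exact: commute_sym.
Qed.

Lemma commT_commT a b c : commute (C a b) (T c).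
Proof. exact: commT_commute. Qed.

Lemma T_addE a b : T (a + b) = T a * T b * (defect a b)^-1.
Proof. by rewrite /defect invgM invgK mulVKg. Qed.

Lemma commT_addr a b c : C a (b + c) = C a b * C a c.
Proof.
rewrite T_addE commgMr_commute; last 2 first.
- exact/commuteVl/defect_commT.
- by apply/commuteVl/commuteM.
rewrite commgMr_central; last exact: commT_commT.
by apply: commute_commg; apply: commT_commT.
Qed.

Lemma commT_addl a b c : C (a + b) c = C a c * C b c.
Proof.
rewrite -invgR commT_addr invgM !invgR.
by apply: commute_commg; apply: commT_commT.
Qed.

Lemma commT_mulnl a b n : C (a *+ n) b = C a b ^+ n.
Proof.
elim: n => [|n IHn]; first by rewrite mulr0n T0 comm1g.
by rewrite mulrS commT_addl IHn expgS.
Qed.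

Lemma commT_mulnr a b n : C a (b *+ n) = C a b ^+ n.
Proof.
elim: n => [|n IHn]; first by rewrite mulr0n T0 commg1.
by rewrite mulrS commT_addr IHn expgS.
Qed.

Lemma T_mulmxE a : T (f *m a) = T a ^ l^-1.
Proof. by rewrite conjgE invgK mulgA T_conj mulgK. Qed.

Lemma commT_mulmx a b : C (f *m a) (f *m b) = C a b.
Proof.
rewrite !T_mulmxE -conjRg; apply/conjg_fixP/commgP.
by apply: commuteV; apply: commT_commute.
Qed.

(* In [group_scope] the numeral [1] is the group unit, hence the [%R] on
   matrix indices below. *)
Local Notation c := (C (delta_mx 0%R 0%R) (delta_mx 1%R 0%R)).

Lemma commT_coordE a b :
  C a b = c ^+ (a 0%R 0%R * b 1%R 0%R) * c ^- (a 1%R 0%R * b 0%R 0%R).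
Proof.
rewrite {1}(cV2_deltaE a) {1}(cV2_deltaE b) !Fp_scalerE.
rewrite commT_addl !commT_addr !commT_mulnl !commT_mulnr !commgg !expg1n mul1g mulg1.
by rewrite -[C (delta_mx 1%R 0%R) _]invgR -!expgnA expVgn !(mulnC (b _ _)).
Qed.

Lemma commT_char : c ^+ p = 1.
Proof. by rewrite -commT_mulnl -scaler_nat pchar_Fp_0 // scale0r T0 comm1g. Qed.

Hypothesis det_neq1 : \det f != 1%R.

(* [c] is fixed by [f] and [f] multiplies the pairing by [det f], so
   [c = c ^+ det f] in an exponent [p] group. *)
Lemma commT_eq1 a b : C a b = 1.
Proof.
rewrite commT_coordE; set c := C _ _.
suff -> : c = 1 by rewrite !expg1n invg1 mulg1.
apply: (@expg_eq_trivial _ _ p_pr c (f 1%R 0%R * f 0%R 1%R + 1) (f 0%R 0%R * f 1%R 1%R)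
          commT_char).
  rewrite -Fp_nat_eq // natrD !natrM !natr_Zp; apply: contra det_neq1.
  by rewrite det_mx2 => /eqP <-; rewrite [(f 0%R 1%R * _)%R]mulrC addrAC subrr add0r.
have := commT_mulmx (delta_mx 0%R 0%R) (delta_mx 1%R 0%R).
rewrite commT_coordE -!colE !mxE -/c => /eqP; rewrite divg_eq -expgS => /eqP ->.
by rewrite addn1.
Qed.

Hypothesis f_unit : f \in unitmx.
Hypothesis oneBf_unit : (1 - f)%R \in unitmx.
Hypothesis T_split : forall u v,
  T u * T (f *m v) = T ((1 - f) *m u + f *m v)%R * T (f *m u).

Lemma T_additive a b : T a * T b = T (a + b).
Proof.
pose u := invmx (1 - f)%R *m a; pose v := invmx f *m b.
have Eu : ((1 - f) *m u)%R = a by rewrite mulmxA mulmxV // mul1mx.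
have Ev : f *m v = b by rewrite mulmxA mulmxV // mul1mx.
have := T_split u 0; rewrite mulmx0 addr0 T0 mulg1 Eu => Tu.
have TfuTb : commute (T (f *m u)) (T b) by apply/commgP/eqP/commT_eq1.
by move: (T_split u v); rewrite Eu Ev Tu -mulgA TfuTb mulgA => /mulIg.
Qed.
End CentralCommutators.

Lemma Sym_ext S (v w : Sym S) : sym_fun v =1 sym_fun w -> v = w.
Proof.
case: v w => [fv iv fvK ivK] [fw iw fwK iwK] /= /funext fvw; subst fw.
have ivw : iv = iw by apply: funext => x; apply: (can_inj fvK); rewrite ivK iwK.
subst iw; congr MkSym; exact: Prop_irrelevance.
Qed.

Definition symg S := Sym S.

Section SymGroup.
Variable S : Type.
Implicit Types u v w : symg S.

Definition sym_mul v w : symg S :=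
  MkSym (can_comp (sym_funK v) (sym_funK w)) (can_comp (sym_invK w) (sym_invK v)).
Definition sym_one : symg S := @MkSym S id id (fun=> erefl) (fun=> erefl).
Definition sym_inverse v : symg S := MkSym (sym_invK v) (sym_funK v).

Lemma sym_mulA : associative sym_mul. Proof. by move=> u v w; apply: Sym_ext. Qed.
Lemma sym_mul1g : left_id sym_one sym_mul. Proof. by move=> v; apply: Sym_ext. Qed.
Lemma sym_mulg1 : right_id sym_one sym_mul. Proof. by move=> v; apply: Sym_ext. Qed.
Lemma sym_mulVg : left_inverse sym_one sym_inverse sym_mul.
Proof. by move=> v; apply: Sym_ext => x /=; rewrite sym_funK. Qed.
Lemma sym_mulgV : right_inverse sym_one sym_inverse sym_mul.
Proof. by move=> v; apply: Sym_ext => x /=; rewrite sym_invK. Qed.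
End SymGroup.

HB.instance Definition _ S := gen_eqMixin (symg S).
HB.instance Definition _ S := gen_choiceMixin (symg S).
HB.instance Definition _ S := isGroup.Build (symg S)
  (@sym_mulA S) (@sym_mul1g S) (@sym_mulg1 S) (@sym_mulVg S) (@sym_mulgV S).

Lemma symg_mulE S (v w : symg S) x : sym_fun (v * w)%g x = sym_fun v (sym_fun w x).
Proof. by []. Qed.

Lemma symg_invE S (v : symg S) x : sym_fun v^-1%g x = sym_inv v x.
Proof. by []. Qed.

Section CocycleExtension.
Context {Q S : Type} {op opi : Q -> Q -> Q} {th : Q -> Q -> Sym S}.
Hypothesis opK : forall x, cancel (op x) (opi x).
Hypothesis opiK : forall x, cancel (opi x) (op x).

Definition ext_act x (e : Q * S) : Q * S := (op x e.1, sym_fun (th x e.1) e.2).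
Definition ext_actV x (e : Q * S) : Q * S :=
  (opi x e.1, sym_inv (th x (opi x e.1)) e.2).

Lemma ext_actK x : cancel (ext_act x) (ext_actV x).
Proof. by case=> y s; rewrite /ext_act /ext_actV /= opK sym_funK. Qed.

Lemma ext_actVK x : cancel (ext_actV x) (ext_act x).
Proof. by case=> y s; rewrite /ext_act /ext_actV /= opiK sym_invK. Qed.

Definition ext_lift x : symg (Q * S) := MkSym (ext_actK x) (ext_actVK x).

Definition lies_over (w : symg (Q * S)) (g : Q -> Q) :=
  (forall e, (sym_fun w e).1 = g e.1) /\
  (forall x e, sym_fun w (ext_act x e) = ext_act (g x) (sym_fun w e)).

Lemma eq_lies_over {w g g'} : g =1 g' -> lies_over w g -> lies_over w g'.
Proof. by move=> gg' [w1 w2]; split=> [e | x e]; rewrite -gg'. Qed.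

Lemma lies_overM {v w g g'} :
  lies_over v g -> lies_over w g' -> lies_over (v * w)%g (g \o g').
Proof.
by move=> [v1 v2] [w1 w2]; split=> [e | x e]; rewrite !symg_mulE ?v1 ?w1 ?w2 ?v2.
Qed.

Lemma lies_overV {w g g'} :
  cancel g g' -> cancel g' g -> lies_over w g -> lies_over w^-1%g g'.
Proof.
move=> gK g'K [w1 w2]; split=> [e | x e]; rewrite !symg_invE.
  by rewrite -{2}(sym_invK w e) w1 gK.
by apply: (can_inj (sym_funK w)); rewrite w2 !sym_invK g'K.
Qed.

Lemma lies_over_id_commute {w} x : lies_over w id -> commute w (ext_lift x).
Proof. by case=> _ w2; apply: Sym_ext => e; rewrite !symg_mulE /= w2. Qed.

Hypothesis op_dist : forall x y z, op x (op y z) = op (op x y) (op x z).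
Hypothesis th_cocycle : is_quandle_cocycle op th.

Lemma ext_act_dist x y e : ext_act x (ext_act y e) = ext_act (op x y) (ext_act x e).
Proof. by case: e => z s; rewrite /ext_act /= op_dist th_cocycle.1. Qed.

Lemma ext_lift_idem x s : op x x = x -> sym_fun (ext_lift x) (x, s) = (x, s).
Proof. by move=> xx; rewrite /= /ext_act /= xx th_cocycle.2. Qed.

Lemma lies_over_lift x : lies_over (ext_lift x) (op x).
Proof. by split=> // y e; apply: ext_act_dist. Qed.

Lemma ext_liftM x y : (ext_lift x * ext_lift y = ext_lift (op x y) * ext_lift x)%g.
Proof. by apply: Sym_ext => e; apply: ext_act_dist. Qed.

End CocycleExtension.

Lemma mulmx_cV2E {R : comPzRingType} (A : 'M[R]_2) (x : 'cV[R]_2) i :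
  (A *m x) i 0 = A i 0 * x 0 0 + A i 1 * x 1 0.
Proof.
rewrite !mxE !big_ord_recl big_ord0 addr0.
by congr (_ * _ + _ * _); congr (_ _ _); apply: val_inj.
Qed.

Definition wedge {R : comPzRingType} (x y : 'cV[R]_2) : R := x 0 0 * y 1 0 - x 1 0 * y 0 0.

Lemma wedgexx {R : comPzRingType} (x : 'cV[R]_2) : wedge x x = 0.
Proof. by rewrite /wedge mulrC subrr. Qed.

Lemma affine_coordE {R : comPzRingType} (A : 'M[R]_2) (x y : 'cV[R]_2) i :
  (x + A *m (y - x)) i 0 = x i 0 + (A i 0 * (y 0 0 - x 0 0) + A i 1 * (y 1 0 - x 1 0)).
Proof. by rewrite mxE mulmx_cV2E !mxE. Qed.

Lemma wedge_affine_defect {R : comPzRingType} (A : 'M[R]_2) (x y z : 'cV[R]_2) :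
  wedge x z + wedge (x + A *m (y - x)) (x + A *m (z - x))
    - (wedge y z + wedge x (y + A *m (z - y)))
  = (\det A - 1) * (wedge x y + wedge y z - wedge x z).
Proof. by rewrite det_mx2 /wedge !affine_coordE; ring. Qed.

Definition sym_add {V : zmodType} (c : V) : Sym V := MkSym (addrK c) (subrK c).

Lemma sym_addE {V : zmodType} (c s : V) : sym_fun (sym_add c) s = s + c.
Proof. by []. Qed.

Section AdditiveCocycles.
Context {Q : Type} {V : zmodType} {op : Q -> Q -> Q} {phi : Q -> Q -> V}.

Lemma sym_add_cocycle :
  (forall x, phi x x = 0) ->
  (forall x y z, phi x z + phi (op x y) (op x z) = phi y z + phi x (op y z)) ->
  is_quandle_cocycle op (fun x y => sym_add (phi x y)).
Proof.
move=> phi_xx phi_cocycle; split=> [x y z s | x s]; rewrite !sym_addE ?phi_xx ?addr0 //.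
by rewrite -!addrA phi_cocycle.
Qed.

Lemma sym_add_coboundary :
  cohomologous_to_trivial op (fun x y => sym_add (phi x y)) ->
  exists c : Q -> V, forall x y, c (op x y) = c y + phi x y.
Proof.
case=> gam gamE; exists (fun y => sym_fun (gam y) 0) => x y.
by rewrite -sym_addE gamE sym_funK.
Qed.

End AdditiveCocycles.

Section AffineQuandle.
Variables (p : nat) (f : 'M['F_p]_2).
Local Notation Q := 'cV['F_p]_2.
Local Notation op := (aff_op f).

Lemma aff_opE x y : op x y = (1 - f) *m x + f *m y.
Proof. by rewrite /aff_op mulmxBr mulmxBl mul1mx addrA addrAC. Qed.

Lemma mulmx_oneB_comm : f *m (1 - f) = (1 - f) *m f.
Proof. by rewrite mulmxBr mulmxBl mulmx1 mul1mx. Qed.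

Lemma aff_op_dist x y z : op x (op y z) = op (op x y) (op x z).
Proof.
have splitx : (1 - f) *m x = (1 - f) *m (1 - f) *m x + f *m (1 - f) *m x.
  by rewrite -!mulmxDl subrK mul1mx.
by rewrite !aff_opE !mulmxDr !mulmxA -mulmx_oneB_comm {1}splitx addrACA.
Qed.

Lemma aff_op_idem x : op x x = x.
Proof. by rewrite /aff_op subrr mulmx0 addr0. Qed.

Hypothesis f_unit : f \in unitmx.

Lemma aff_opK x : cancel (op x) (aff_op (invmx f) x).
Proof.
by move=> y; rewrite /aff_op (addrC x (f *m _)) addrK mulmxA mulVmx // mul1mx addrC subrK.
Qed.

Lemma aff_opVK x : cancel (aff_op (invmx f) x) (op x).
Proof.
move=> y; rewrite /aff_op (addrC x (invmx f *m _)) addrK.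
by rewrite mulmxA mulmxV // mul1mx addrC subrK.
Qed.

Lemma aff_quandle : is_quandle op.
Proof.
split; [move=> x | exact: aff_op_dist | exact: aff_op_idem].
by exists (aff_op (invmx f) x); [apply: aff_opK | apply: aff_opVK].
Qed.

Hypothesis oneBf_unit : 1 - f \in unitmx.
Local Notation h := (invmx (1 - f)).

Lemma aff_op_solve x y : op (h *m (y - f *m x)) x = y.
Proof. by rewrite aff_opE mulmxA mulmxV // mul1mx subrK. Qed.

Lemma aff_connected : quandle_connected op.
Proof. by move=> x y; rewrite -(aff_op_solve x y); apply/lorbit_L/lorbit_refl. Qed.

Lemma mulmx_invmx_oneB_comm : f *m h = h *m f.
Proof.
rewrite -[f *m h]mul1mx -(mulVmx oneBf_unit) -!mulmxA; congr (_ *m _).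
by rewrite !mulmxA -mulmx_oneB_comm -mulmxA mulmxV // mulmx1.
Qed.

Section TrivialCocycles.
Variables (S : Type) (th : Q -> Q -> Sym S).
Hypothesis th_cocycle : is_quandle_cocycle op th.

Local Notation lift := (@ext_lift _ _ _ _ th aff_opK aff_opVK).
Local Notation lies_over := (@lies_over _ _ op th).
Local Open Scope group_scope.

Let lift_over x : lies_over (lift x) (op x).
Proof. exact: lies_over_lift aff_opK aff_opVK aff_op_dist th_cocycle x. Qed.

(* Locked: unfolding [transl] during unification triggers computations on
   concrete matrices over 'F_p. *)
Fact transl_key : unit. Proof. by []. Qed.
Definition transl := locked_with transl_key (fun a => lift (h *m a) * (lift 0)^-1).

Lemma translE a : transl a = lift (h *m a) * (lift 0)^-1.
Proof. by rewrite /transl locked_withE. Qed.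

Lemma transl_over a : lies_over (transl a) (+%R a).
Proof.
rewrite translE.
have := lies_overM (lift_over (h *m a)) (lies_overV (aff_opK 0) (aff_opVK 0) (lift_over 0)).
apply: eq_lies_over => y /=.
by rewrite aff_opE {1}/aff_op add0r subr0 !mulmxA !mulmxV // !mul1mx.
Qed.

Lemma transl0 : transl 0 = 1.
Proof. by rewrite translE mulmx0 mulgV. Qed.

Lemma lift_translE x : lift x = transl ((1 - f)%R *m x) * lift 0.
Proof. by rewrite translE mulgVK mulmxA mulVmx // mul1mx. Qed.

Lemma transl_conj a : lift 0 * transl a = transl (f *m a) * lift 0.
Proof.
rewrite !translE [RHS]mulgVK [LHS]mulgA.
rewrite (ext_liftM aff_opK aff_opVK aff_op_dist th_cocycle 0) [LHS]mulgK.
by rewrite aff_opE mulmx0 add0r !mulmxA mulmx_invmx_oneB_comm.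
Qed.

Lemma transl_split u v :
  transl u * transl (f *m v) = transl ((1 - f) *m u + f *m v)%R * transl (f *m u).
Proof.
suff liftM_transl x y : transl ((1 - f) *m x)%R * transl (f *m ((1 - f) *m y))%R
                     = transl ((1 - f) *m op x y)%R * transl (f *m ((1 - f) *m x))%R.
  have hK w : ((1 - f) *m (h *m w))%R = w by rewrite mulmxA (mulmxV oneBf_unit) mul1mx.
  have opE : ((1 - f) *m op (h *m u) (h *m v))%R = ((1 - f) *m u + f *m v)%R.
    rewrite aff_opE mulmxDr hK !mulmxA -mulmx_oneB_comm -(mulmxA f).
    by rewrite (mulmxV oneBf_unit) mulmx1.
  by move: (liftM_transl (h *m u) (h *m v)); rewrite opE !hK.
have := ext_liftM aff_opK aff_opVK aff_op_dist th_cocycle x y.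
rewrite (lift_translE x) (lift_translE y) (lift_translE (op x y)).
exact: mulg_shift_cancel (transl_conj _) (transl_conj _).
Qed.

Lemma transl_defect_over a b : lies_over ((transl (a + b))^-1 * (transl a * transl b)) id.
Proof.
apply: eq_lies_over (lies_overM (lies_overV (addKr _) (addNKr _) (transl_over (a + b)))
                                (lies_overM (transl_over a) (transl_over b))) => y /=.
by rewrite (addrA a b y) addKr.
Qed.

Lemma lies_over_id_commute_transl w a : lies_over w id -> commute w (transl a).
Proof.
move=> w_id; rewrite translE; apply: commuteM; first exact: lies_over_id_commute.
exact/commuteV/lies_over_id_commute.
Qed.

Definition fiber_fun y s := (sym_fun (transl y) (0, s)).2.
Definition fiber_inv y s := (sym_inv (transl y) (y, s)).2.

Lemma transl_pairE y s : sym_fun (transl y) (0, s) = (y, fiber_fun y s).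
Proof. by rewrite [LHS]surjective_pairing (transl_over y).1 addr0. Qed.

Lemma translV_pairE y s : sym_inv (transl y) (y, s) = (0, fiber_inv y s).
Proof.
have transl_overV := lies_overV (addKr y) (addNKr y) (transl_over y).
by rewrite [LHS]surjective_pairing -symg_invE transl_overV.1 addNr.
Qed.

Lemma fiber_funK y : cancel (fiber_fun y) (fiber_inv y).
Proof. by move=> s; rewrite /fiber_inv -transl_pairE sym_funK. Qed.

Lemma fiber_invK y : cancel (fiber_inv y) (fiber_fun y).
Proof. by move=> s; rewrite /fiber_fun -translV_pairE sym_invK. Qed.

Definition fiber y : Sym S := MkSym (fiber_funK y) (fiber_invK y).

Hypothesis p_pr : prime p.
Hypothesis det_neq1 : \det f != 1%R.

Lemma transl_additive a b : transl a * transl b = transl (a + b).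
Proof.
apply: (T_additive p_pr transl0 transl_conj _ _ det_neq1 f_unit oneBf_unit transl_split).
  by move=> a' b' c; apply/lies_over_id_commute_transl/transl_defect_over.
by move=> a' b'; apply/lies_over_id_commute/transl_defect_over.
Qed.

Lemma aff_cocycle_trivial : cohomologous_to_trivial op th.
Proof.
exists fiber => x y s /=; set s' := fiber_inv y s.
have liftxE : lift x * transl y = transl (op x y) * lift 0.
  by rewrite lift_translE -mulgA transl_conj mulgA transl_additive aff_opE.
have E := congr1 (fun w => sym_fun w (0, s')) liftxE; cbv beta in E.
rewrite !symg_mulE ext_lift_idem ?aff_op_idem // transl_pairE /s' fiber_invK in E.
exact (congr1 snd E).
Qed.

End TrivialCocycles.

Lemma wedge_cocycle : \det f = 1 -> is_quandle_cocycle op (fun x y => sym_add (wedge x y)).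
Proof.
move=> det1; apply: sym_add_cocycle => [x | x y z]; first exact: wedgexx.
have det1' : \det f - 1 = 0 by rewrite det1 subrr.
move: (wedge_affine_defect f x y z); rewrite det1' mul0r => /eqP.
by rewrite subr_eq0 => /eqP.
Qed.

Lemma wedge_cocycle_nontrivial :
  ~ cohomologous_to_trivial op (fun x y => sym_add (wedge x y)).
Proof.
move/sym_add_coboundary => [c cE].
have c_const e : c e = c 0.
  by rewrite -(aff_op_solve 0 e) cE /wedge !mxE !mulr0 subrr addr0.
move: (cE (delta_mx 0 0) (delta_mx 1 0)); rewrite !c_const /wedge !mxE /=.
by rewrite mulr1 mulr0 subr0 -{1}[c 0]addr0 => /addrI/eqP; rewrite eq_sym oner_eq0.
Qed.

Theorem aff_simply_connectedE : prime p -> simply_connected op <-> \det f != 1.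
Proof.
move=> p_pr; split=> [[_ [_ sc]] | det_neq1].
  by apply/negP => /eqP det1; apply/wedge_cocycle_nontrivial/sc/wedge_cocycle.
split; [exact: aff_quandle | split; [exact: aff_connected |]].
by move=> S th th_cocycle; apply: aff_cocycle_trivial.
Qed.

End AffineQuandle.

Lemma det_oneB_mx2 {R : comPzRingType} (A : 'M[R]_2) :
  \det (1 - A) = 1 - (A 0 0 + A 1 1) + \det A.
Proof. by rewrite !det_mx2 !mxE /=; ring. Qed.

Lemma irredp_noroot {F : fieldType} (q : {poly F}) x :
  irreducible_poly q -> (2 < size q)%N -> ~~ root q x.
Proof.
move=> q_irr q_gt2; apply/negP; rewrite -dvdp_XsubCl.
case/(irredp_XsubCP q_irr) => /eqp_size; rewrite size_XsubC ?size_poly1 // => q2.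
by rewrite -q2 in q_gt2.
Qed.

Lemma size_polyq p (b0 b1 : 'F_p) : size (polyq b0 b1) = 3%N.
Proof.
rewrite /polyq -addrA size_polyDl size_polyXn //.
apply: (leq_ltn_trans (size_polyD _ _)); rewrite gtn_max.
rewrite (leq_ltn_trans (size_scale_leq _ _)) ?size_polyX //.
exact: leq_ltn_trans (size_polyC_leq1 _) _.
Qed.

Section PrimeField.
Variable p : nat.
Hypothesis p_pr : prime p.

Lemma aff_simply_connected_charE (f : 'M['F_p]_2) :
  \det f != 0 -> 1 - (f 0 0 + f 1 1) + \det f != 0 ->
  simply_connected (aff_op f) <-> \det f != 1.
Proof.
move=> det_neq0 char1_neq0.
by apply: aff_simply_connectedE; rewrite // unitmxE unitfE ?det_oneB_mx2.
Qed.

Lemma aff_upper_simply_connectedE (f : 'M['F_p]_2) :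
  f 1 0 = 0 -> f 0 0 \notin [:: 0; 1] -> f 1 1 \notin [:: 0; 1] ->
  simply_connected (aff_op f) <-> f 0 0 * f 1 1 != 1.
Proof.
rewrite !inE !negb_or => f10 /andP[f00_0 f00_1] /andP[f11_0 f11_1].
have detE : \det f = f 0 0 * f 1 1 by rewrite det_mx2 f10 mulr0 subr0.
rewrite -detE; apply: aff_simply_connected_charE; rewrite detE ?mulf_neq0 //.
have -> : 1 - (f 0 0 + f 1 1) + f 0 0 * f 1 1 = (1 - f 0 0) * (1 - f 1 1) by ring.
by rewrite mulf_neq0 // subr_eq0 eq_sym.
Qed.

Lemma Fp_nat_notin01 n : (1 < n < p)%N -> (n%:R : 'F_p) \notin [:: 0; 1].
Proof.
case/andP=> n1 np; move: (Fp_nat_eq n 0 p_pr) (Fp_nat_eq n 1 p_pr).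
rewrite mulr0n mulr1n !inE => -> ->; rewrite !modn_small ?prime_gt0 ?prime_gt1 //.
by rewrite negb_or -lt0n (ltnW n1) neq_ltn n1 orbT.
Qed.

Lemma matD_simply_connected b c : (1 < b)%N -> (b <= c)%N -> (c < p)%N ->
  simply_connected (aff_op (matD p b c)) <-> ~~ (b * c == 1 %[mod p])%N.
Proof.
move=> b1 bc cp; have c1 := leq_trans b1 bc; have bp := leq_ltn_trans bc cp.
rewrite aff_upper_simply_connectedE ?mxE //= ?Fp_nat_notin01 ?b1 ?c1 //.
by move: (Fp_nat_eq (b * c) 1 p_pr); rewrite mulr1n natrM => ->.
Qed.

Lemma matG_simply_connected b : (1 < b)%N -> (b < p)%N ->
  simply_connected (aff_op (matG p b)) <-> ~~ (b + 1 == 0 %[mod p])%N.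
Proof.
move=> b1 bp; rewrite aff_upper_simply_connectedE ?mxE //= ?Fp_nat_notin01 ?b1 //.
have := @Fp_nat_notin01 b; rewrite b1 bp !inE => /(_ isT)/norP[_ b_neq1].
have sq1E : (b%:R * b%:R - 1 : 'F_p) = (b%:R - 1) * (b + 1)%:R by rewrite natrD; ring.
rewrite -subr_eq0 sq1E mulf_eq0 subr_eq0 (negbTE b_neq1) /=.
by move: (Fp_nat_eq (b + 1) 0 p_pr); rewrite mulr0n => ->.
Qed.

Lemma matH_simply_connected (b0 b1 : 'F_p) : irreducible_poly (polyq b0 b1) ->
  simply_connected (aff_op (matH b0 b1)) <-> b0 != 1.
Proof.
move=> q_irr; have q_noroot x : (polyq b0 b1).[x] != 0.
  by apply: irredp_noroot q_irr _; rewrite size_polyq.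
have detE : \det (matH b0 b1) = b0 by rewrite det_mx2 !mxE /=; ring.
rewrite aff_simply_connected_charE detE //.
  have -> : b0 = (polyq b0 b1).[0] by rewrite /polyq !hornerE; ring.
  exact: q_noroot.
have -> : 1 - (matH b0 b1 0 0 + matH b0 b1 1 1) + b0 = (polyq b0 b1).[1].
  by rewrite /polyq !hornerE !mxE /=; ring.
exact: q_noroot.
Qed.

End PrimeField.

Theorem theorem3p16 (p : nat) (hp : prime p) :
  (forall b c : nat, (1 < b)%N -> (b <= c)%N -> (c < p)%N ->
     (simply_connected (aff_op (matD p b c)) <-> ~~ (b * c == 1 %[mod p])%N))
  /\ (forall b : nat, (1 < b)%N -> (b < p)%N ->
     (simply_connected (aff_op (matG p b)) <-> ~~ (b + 1 == 0 %[mod p])%N))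
  /\ (forall b0 b1 : 'F_p, irreducible_poly (polyq b0 b1) ->
     (simply_connected (aff_op (matH b0 b1)) <-> b0 != 1)).
Proof.
split; first exact: matD_simply_connected.
by split; [exact: matG_simply_connected | exact: matH_simply_connected].
Qed.
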